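(* Let $N$ be an augmented network containing $G_{\mathrm{UN}}$. Suppose $\Gamma_1,\Gamma_2$ are distinct minimal edge-cuts of $N$, each consisting only of external Steiner edges. If there is a component $C$ of $G_{\mathrm{UN}}$ such that every edge in $\Gamma_1\cup\Gamma_2$ is incident to (has an endpoint in) $C$, then $\Gamma_1\cap\Gamma_2=\emptyset$.
   Context: All graphs are finite, simple and undirected. The vertex-connectivity $c(G)$ is the minimum number of vertices whose removal yields a disconnected or trivial graph, with $c(K_n)=n-1$ and the convention $c(K_1)=c(K_2)=2$; $G$ is $2$-connected if $c(G)\ge2$. An edge-cut of a graph $G$ is a set $E$ of edges such that $G-E$ has strictly more components than $G$; it is minimal if minimal by inclusion. Setting: $X$ is a set of terminals and $S$ a set of at most $k$ Steiner points; $\Delta=5$ or $7$ according as $1<p<\infty$ or $p\in\{1,\infty\}$. A Steiner edge is an edge incident to a Steiner point; it is external if its other endpoint is a terminal. $G_{\mathrm{UN}}$ is a fixed graph with vertex set $X\cup S$ containing no Steiner edges, with $b(G_{\mathrm{UN}})\le \Delta k$, where $b$ counts leaf blocks plus twice isolated blocks (blocks = maximal $2$-connected subgraphs, including isolated vertices; a leaf block contains exactly one cut-vertex, an isolated block none). An augmented network containing $G_{\mathrm{UN}}$ is a $2$-connected graph obtained from $G_{\mathrm{UN}}$ by adding Steiner edges. *)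

(* finite simple graphs on a finite vertex type T.
   A graph is given by a vertex set A : {set T} and an edge set
   F : {set {set T}} (each edge an unordered pair = 2-element set). *)
From mathcomp Require Import all_boot.
Set Implicit Arguments. Unset Strict Implicit. Unset Printing Implicit Defensive.

Section Graphs.
Variable T : finType.
Implicit Types (A : {set T}) (F E : {set {set T}}) (x y v : T).

Definition simple_edges F : bool := [forall e in F, #|e| == 2].

Definition adj_on A F : rel T :=
  fun x y => [&& x \in A, y \in A & [set x; y] \in F].

Definition comps_on A F : {set {set T}} :=
  [set [set y in A | connect (adj_on A F) x y] | x in A].

Definition ncomp A F : nat := #|comps_on A F|.

Definition connected_on A F : bool :=
  [forall x in A, forall y in A, connect (adj_on A F) x y].

(* vertex-connectivity at least 2, with c(K_1) = c(K_2) = 2 and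
   c(K_n) = n - 1: a graph with >= 3 vertices is 2-connected iff it is
   connected and stays connected after deleting any single vertex;
   a graph on 1 or 2 vertices is 2-connected iff it is connected. *)
Definition two_connected A F : bool :=
  [&& 0 < #|A|, connected_on A F &
      (#|A| <= 2) || [forall v in A, connected_on (A :\ v) F]].

Definition subgraph E A F : bool :=
  (F \subset E) && [forall e in F, e \subset A].

(* blocks: maximal 2-connected subgraphs (including isolated vertices) *)
Definition is_block E A F : bool :=
  [&& subgraph E A F, two_connected A F &
      [forall A' : {set T}, forall F' : {set {set T}},
         [&& subgraph E A' F', two_connected A' F', A \subset A'
           & F \subset F'] ==> (A' == A) && (F' == F)]].

Definition cut_vertex E v : bool :=
  ncomp [set: T] E < ncomp (setT :\ v) E.

Definition cut_vertices E : {set T} := [set v | cut_vertex E v].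

Definition blocks E : {set {set T} * {set {set T}}} :=
  [set AF | is_block E AF.1 AF.2].

Definition leaf_blocks E := [set AF in blocks E | #|AF.1 :&: cut_vertices E| == 1].
Definition isolated_blocks E := [set AF in blocks E | #|AF.1 :&: cut_vertices E| == 0].

Definition bval E : nat := #|leaf_blocks E| + 2 * #|isolated_blocks E|.

Definition edge_cut E (G : {set {set T}}) : bool :=
  (G \subset E) && (ncomp [set: T] E < ncomp [set: T] (E :\: G)).

Definition minimal_edge_cut E (G : {set {set T}}) : Prop :=
  edge_cut E G /\ forall G' : {set {set T}}, G' \proper G -> ~~ edge_cut E G'.

(* Steiner points are S = ~: X (vertex set is X ∪ S, disjoint union) *)
Definition steiner_edge (X : {set T}) (e : {set T}) : bool := e :&: ~: X != set0.
Definition external_steiner_edge (X : {set T}) (e : {set T}) : bool :=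
  (e :&: ~: X != set0) && (e :&: X != set0).

End Graphs.

From mathcomp Require Import all_boot.
Set Implicit Arguments. Unset Strict Implicit. Unset Printing Implicit Defensive.

(* In a connected graph a minimal edge-cut is exactly the edge boundary of the
   side B containing any fixed vertex s.  Let e = {s, c} be a common edge of
   Gamma_1 and Gamma_2 with c in C.  The component C is joined by edges of
   G_UN, which carry no Steiner point and so lie in neither cut; hence C sits
   on the far side of either cut, away from s.  An edge inside the s-side B_1
   of Gamma_1 misses C, so it is not in Gamma_2: thus B_1 is contained in the
   s-side B_2 of Gamma_2, and symmetrically.  Then B_1 = B_2 and
   Gamma_1 = Gamma_2. *)

Section EdgeCuts.
Variable T : finType.
Implicit Types (A D C : {set T}) (F G : {set {set T}}) (x y : T).

Lemma connect_invariant (e e' : rel T) (P : pred T) x y :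
  (forall a b, P a -> e a b -> P b && e' a b) ->
  P x -> connect e x y -> P y && connect e' x y.
Proof.
move=> step Px /connectP [p e_p ->]; elim: p x Px e_p => [|b p IHp] a Pa /=.
  by rewrite Pa connect0.
case/andP=> e_ab e_p; case/andP: (step a b Pa e_ab) => Pb e'_ab.
case/andP: (IHp b Pb e_p) => -> e'_bp.
by rewrite (connect_trans (connect1 e'_ab) e'_bp).
Qed.

Lemma adj_on_sym A F : symmetric (adj_on A F).
Proof. by move=> x y; rewrite /adj_on setUC andbCA. Qed.

Lemma connect_adj_on_sym A F : connect_sym (adj_on A F).
Proof. exact/sym_connect_sym/adj_on_sym. Qed.

Definition component F x : {set T} := [set y | connect (adj_on setT F) x y].

Definition edge_boundary F D : {set {set T}} :=
  [set f in F | (f :&: D != set0) && ~~ (f \subset D)].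

Lemma ncomp_gt0 F x : 0 < ncomp setT F.
Proof.
apply/card_gt0P; exists (component F x); apply/imsetP; exists x => //.
by apply/setP => y; rewrite !inE.
Qed.

Lemma ncomp_le1 F x : (forall y, connect (adj_on setT F) x y) -> ncomp setT F <= 1.
Proof.
move=> reach; rewrite /ncomp -(cards1 (setT : {set T})); apply: subset_leq_card.
apply/subsetP => D /imsetP [z _ ->]; rewrite in_set1; apply/eqP/setP => y.
rewrite !inE; apply: connect_trans (reach y).
by rewrite connect_adj_on_sym.
Qed.

Lemma ncomp_gt1 F x y : ~~ connect (adj_on setT F) x y -> 1 < ncomp setT F.
Proof.
move=> not_xy; have neq_xy : component F x != component F y.
  apply: contraNneq not_xy => eq_xy.
  have : y \in component F y by rewrite inE connect0.
  by rewrite -eq_xy inE.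
apply: (@leq_trans #|[set component F x; component F y]|); first by rewrite cards2 neq_xy.
apply/subset_leq_card/subsetP => D; rewrite !inE => /orP [] /eqP ->; apply/imsetP.
  by exists x => //; apply/setP => z; rewrite !inE.
by exists y => //; apply/setP => z; rewrite !inE.
Qed.

Lemma edge_cut_separates F G x :
  edge_cut F G -> exists y, y \notin component (F :\: G) x.
Proof.
case/andP=> _ lt_ncomp; apply/existsP; rewrite -negb_forall.
apply: contraL lt_ncomp => /forallP all_in; rewrite -leqNgt.
apply: leq_trans (ncomp_le1 (x := x) _) (ncomp_gt0 F x) => y.
by move: (all_in y); rewrite inE.
Qed.

Lemma edge_eq_pair (f : {set T}) u v :
  #|f| = 2 -> u \in f -> v \in f -> u != v -> f = [set u; v].
Proof.
move=> card_f uf vf neq_uv; apply/esym/eqP.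
rewrite eqEcard card_f cards2 neq_uv andbT.
by apply/subsetP => z; rewrite !inE => /orP [] /eqP ->.
Qed.

Lemma card2_set2 (f : {set T}) u : #|f| = 2 -> u \in f -> exists v, f = [set u; v].
Proof.
move=> card_f uf; have /cards1P [v f_v] : #|f :\ u| == 1.
  by move: card_f; rewrite (cardsD1 u f) uf add1n => -[->].
by exists v; rewrite -(setD1K uf) f_v.
Qed.

Lemma edge_boundary_component_sub F G x :
  simple_edges F -> edge_boundary F (component (F :\: G) x) \subset G.
Proof.
move=> simpleF; apply/subsetP => f; rewrite inE => /and3P [fF].
case/set0Pn=> u; rewrite inE => /andP [uf uD] /subsetPn [v vf vD].
have neq_uv : u != v by apply: contraNneq vD => <-.
have f_uv : f = [set u; v].
  by apply: edge_eq_pair => //; apply/eqP; move/forallP: simpleF => /(_ f); rewrite fF.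
apply: contraR vD => fG.
move: uD; rewrite !inE => xu; apply: connect_trans xu (connect1 _).
by rewrite /adj_on !inE -f_uv fF fG.
Qed.

Lemma edge_boundary_component_cut F G x :
  connected_on setT F -> edge_cut F G ->
  edge_cut F (edge_boundary F (component (F :\: G) x)).
Proof.
move=> connF cutG; set D := component (F :\: G) x.
have [y yD] := edge_cut_separates x cutG.
apply/andP; split; first by apply/subsetP => f; rewrite inE => /andP [].
apply: leq_trans (ncomp_gt1 (x := x) (y := y) _).
  apply: (ncomp_le1 (x := x)) => z.
  move/forallP: connF => /(_ x); rewrite in_setT /= => /forallP /(_ z).
  by rewrite in_setT.
apply: contra yD => xy.
have step a b : a \in D -> adj_on setT (F :\: edge_boundary F D) a b ->
    (b \in D) && adj_on setT (F :\: edge_boundary F D) a b.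
  move=> aD ab; rewrite ab andbT; move: ab.
  rewrite /adj_on !in_setT /= in_setD => /andP [not_bd abF].
  apply: contraR not_bd => bD; rewrite inE abF /=; apply/andP; split.
    by apply/set0Pn; exists a; rewrite in_setI aD in_set2 eqxx.
  by apply/subsetPn; exists b; rewrite // in_set2 eqxx orbT.
have x_D : x \in D by rewrite inE connect0.
by case/andP: (connect_invariant step x_D xy).
Qed.

Lemma minimal_edge_cut_boundary F G x :
  simple_edges F -> connected_on setT F -> minimal_edge_cut F G ->
  G = edge_boundary F (component (F :\: G) x).
Proof.
move=> simpleF connF [cutG minG]; set B := edge_boundary _ _.
have sub_BG : B \subset G := edge_boundary_component_sub G x simpleF.
apply/eqP; rewrite eqEsubset sub_BG andbT; apply: contraT => not_GB.
have := minG B; rewrite properE sub_BG not_GB => /(_ isT).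
by rewrite edge_boundary_component_cut.
Qed.

Lemma comps_on_sub_component F0 F C c :
  C \in comps_on setT F0 -> F0 \subset F -> c \in C -> C \subset component F c.
Proof.
case/imsetP=> x _ ->{C} sub_F0F; rewrite !inE /= => xc.
apply/subsetP => z; rewrite !inE /= => xz; have cz : connect (adj_on setT F0) c z.
  by apply: connect_trans xz; rewrite connect_adj_on_sym.
apply: connect_sub cz => a b; rewrite /adj_on => /and3P [_ _ abF0].
by apply: connect1; rewrite !in_setT (subsetP sub_F0F).
Qed.

Lemma component_disjoint F s c :
  c \notin component F s -> [disjoint component F s & component F c].
Proof.
move=> not_sc; rewrite disjoint_subset; apply/subsetP => z; rewrite !inE => sz.
apply: contra not_sc => cz; rewrite inE; apply: connect_trans sz _.
by rewrite connect_adj_on_sym.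
Qed.

(* An edge of G' has an end in C, so it cannot lie inside a side of G that
   misses C. *)
Lemma component_sub_across_cuts F G G' C s :
  (forall f, f \in G' -> f :&: C != set0) ->
  [disjoint component (F :\: G) s & C] ->
  component (F :\: G) s \subset component (F :\: G') s.
Proof.
move=> meetC disjC; set B := component (F :\: G) s.
have step a b : a \in B -> adj_on setT (F :\: G) a b ->
    (b \in B) && adj_on setT (F :\: G') a b.
  move=> aB ab; have bB : b \in B.
    by move: aB; rewrite !inE => sa; apply: connect_trans sa (connect1 ab).
  rewrite bB /=; move: ab; rewrite /adj_on !in_setT /= !in_setD => /andP [_ abF].
  rewrite abF andbT; apply/negP => abG'.
  case/set0Pn: (meetC _ abG') => z; rewrite in_setI in_set2 => /andP [/orP [] /eqP -> zC].
    by rewrite (disjointFr disjC aB) in zC.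
  by rewrite (disjointFr disjC bB) in zC.
have s_B : s \in B by rewrite inE connect0.
apply/subsetP => y; rewrite [y \in B]inE => sy.
by have /andP [_] := connect_invariant (P := mem B) step s_B sy; rewrite inE.
Qed.

Lemma minimal_edge_cut_side_disjoint F F0 G C s c :
  simple_edges F -> connected_on setT F -> minimal_edge_cut F G ->
  C \in comps_on setT F0 -> F0 \subset F :\: G -> c \in C -> [set c; s] \in G ->
  [disjoint component (F :\: G) s & C].
Proof.
move=> simpleF connF cutG compC sub_F0 cC csG.
apply: disjointWr (comps_on_sub_component compC sub_F0 cC) _.
apply: component_disjoint; move: csG.
rewrite {1}(minimal_edge_cut_boundary s simpleF connF cutG) inE => /and3P [_ _].
apply: contra => cB; apply/subsetP => z; rewrite in_set2.
by case/orP=> /eqP -> //; rewrite inE connect0.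
Qed.

End EdgeCuts.

Lemma plain_edges_off_steiner_cut (T : finType) (X : {set T}) (F0 F G : {set {set T}}) :
  (forall f, f \in F0 -> ~~ steiner_edge X f) ->
  (forall f, f \in G -> external_steiner_edge X f) ->
  F0 \subset F -> F0 \subset F :\: G.
Proof.
move=> plain0 extG sub_F0; apply/subsetP => f f0.
rewrite in_setD (subsetP sub_F0) // andbT.
by apply: contraNN (plain0 f f0) => /extG /andP [].
Qed.

Theorem lemma7 (T : finType) (X : {set T}) (k Delta : nat)
  (E0 EN : {set {set T}}) (G1 G2 : {set {set T}}) (C : {set T}) :
  #|~: X| <= k ->
  (Delta = 5 \/ Delta = 7) ->
  simple_edges E0 ->
  (forall e, e \in E0 -> ~~ steiner_edge X e) ->
  bval E0 <= Delta * k ->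
  simple_edges EN ->
  E0 \subset EN ->
  (forall e, e \in EN :\: E0 -> steiner_edge X e) ->
  two_connected [set: T] EN ->
  minimal_edge_cut EN G1 -> minimal_edge_cut EN G2 -> G1 != G2 ->
  (forall e, e \in G1 -> external_steiner_edge X e) ->
  (forall e, e \in G2 -> external_steiner_edge X e) ->
  C \in comps_on [set: T] E0 ->
  (forall e, e \in G1 :|: G2 -> e :&: C != set0) ->
  G1 :&: G2 = set0.
Proof.
move=> _ _ _ plain0 _ simpleN sub0N _ twoconN cut1 cut2 neq12 ext1 ext2 compC meetC.
have connN : connected_on setT EN by case/and3P: twoconN.
apply/eqP; apply: contraNT neq12 => /set0Pn [e]; rewrite in_setI => /andP [e1 e2].
have /set0Pn [c] : e :&: C != set0 by rewrite meetC // in_setU e1.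
rewrite in_setI => /andP [ec cC].
have eN : e \in EN by case: cut1 => /andP [/subsetP -> //].
have [s e_cs] : exists s, e = [set c; s].
  by apply: card2_set2 ec; apply/eqP; move/forallP: simpleN => /(_ e); rewrite eN.
rewrite e_cs in e1 e2.
have disj1 := minimal_edge_cut_side_disjoint simpleN connN cut1 compC
  (plain_edges_off_steiner_cut plain0 ext1 sub0N) cC e1.
have disj2 := minimal_edge_cut_side_disjoint simpleN connN cut2 compC
  (plain_edges_off_steiner_cut plain0 ext2 sub0N) cC e2.
have meet1 f : f \in G1 -> f :&: C != set0 by move=> fG; rewrite meetC // in_setU fG.
have meet2 f : f \in G2 -> f :&: C != set0 by move=> fG; rewrite meetC // in_setU fG orbT.
apply/eqP; rewrite (minimal_edge_cut_boundary s simpleN connN cut1).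
rewrite (minimal_edge_cut_boundary s simpleN connN cut2); congr (edge_boundary EN _).
by apply/eqP; rewrite eqEsubset (component_sub_across_cuts meet2 disj1)
  (component_sub_across_cuts meet1 disj2).
Qed.
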